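(* Let $\sigma$ be any argumentation semantics whose extensions are maximal admissible sets (w.r.t. set inclusion). For every two argumentation frameworks $AF=(AR,Attacks)$, $AF'=(AR',Attacks')$ with $AF\preceq_N AF'$: if for every $E\in\sigma(AF)$ there exists $E'\in\sigma(AF')$ with $E\subseteq E'$, then for every $E\in\sigma(AF)$ there exists $E'\in\sigma(AF')$ with $E'\not\subseteq AR$ or $E'=E$.
   Context: An argumentation framework is a pair $(AR,Attacks)$ with $AR$ a finite set and $Attacks\subseteq AR\times AR$; $a$ attacks $b$ iff $(a,b)\in Attacks$; a set $S$ attacks $b$ iff some element of $S$ attacks $b$. A set $S$ is conflict-free iff no element of $S$ attacks an element of $S$; an argument $a$ is acceptable w.r.t. $S$ iff every attacker of $a$ is attacked by $S$; a conflict-free $S$ is admissible iff every element of $S$ is acceptable w.r.t. $S$. An argumentation semantics $\sigma$ assigns to each argumentation framework a set $\sigma(AF)$ of subsets of $AR$; ''$\sigma$'s extensions are maximal admissible sets'' means that for every $AF$, every $E\in\sigma(AF)$ is a $\subseteq$-maximal admissible set of $AF$. $AF\preceq_N AF'$ (normal expansion) iff $AR\subseteq AR'$, $Attacks\subseteq Attacks'$ and no $(a,b)\in Attacks'\setminus Attacks$ has both $a,b\in AR$. *)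

From mathcomp Require Import all_boot.
Set Implicit Arguments. Unset Strict Implicit. Unset Printing Implicit Defensive.

(* Argumentation frameworks whose arguments are drawn from an ambient finite
   type U (so that AR ⊆ AR' makes sense between two frameworks). *)
Record AF (U : finType) := mkAF {
  args : {set U};
  attacks : {set U * U};
  attacks_sub : attacks \subset setX args args }.

Section Arg.
Variable U : finType.
Implicit Types (F : AF U) (S : {set U}) (a b : U).

Definition attacksb F a b : bool := (a, b) \in attacks F.

Definition set_attacks F S b : Prop := exists2 a, a \in S & attacksb F a b.

Definition conflict_free F S : Prop :=
  S \subset args F /\ forall a b, a \in S -> b \in S -> ~~ attacksb F a b.

Definition acceptable F a S : Prop :=
  forall b, attacksb F b a -> set_attacks F S b.

Definition admissible F S : Prop :=
  conflict_free F S /\ forall a, a \in S -> acceptable F a S.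

Definition maximal_admissible F S : Prop :=
  admissible F S /\ forall T, admissible F T -> S \subset T -> T = S.

Definition semantics := AF U -> {set U} -> Prop.

Definition ext_maximal_admissible (sigma : semantics) : Prop :=
  forall F E, sigma F E -> maximal_admissible F E.

Definition normal_expansion F F' : Prop :=
  [/\ args F \subset args F',
      attacks F \subset attacks F' &
      forall a b, attacksb F' a b -> ~~ attacksb F a b ->
        ~ (a \in args F /\ b \in args F)].
End Arg.

From mathcomp Require Import all_boot.

Set Implicit Arguments. Unset Strict Implicit. Unset Printing Implicit Defensive.

(* A normal expansion adds no attack between old arguments, so an admissible
   set of the expanded framework lying inside AR is already admissible in the
   original one: its defenders attack old arguments, hence are old attacks.
   If E' ⊇ E is such a set, maximality of E forces E' = E. *)

Section NormalExpansion.
Variables (U : finType) (F F' : AF U).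
Hypothesis FF' : normal_expansion F F'.

Lemma attacksb_args a b : attacksb F a b -> (a \in args F) && (b \in args F).
Proof. by move=> ab; rewrite -in_setX; apply: (subsetP (attacks_sub F)). Qed.

Lemma attacksb_expansion a b : attacksb F a b -> attacksb F' a b.
Proof. by case: FF' => _ sAT _; apply: (subsetP sAT). Qed.

Lemma attacksb_expansion_args a b :
  a \in args F -> b \in args F -> attacksb F' a b = attacksb F a b.
Proof.
move=> aF bF; apply/idP/idP; last exact: attacksb_expansion.
case: FF' => _ _ no_new ab'; apply/negPn/negP => nab.
exact: no_new ab' nab _.
Qed.

Lemma conflict_free_expansion (S : {set U}) :
  S \subset args F -> conflict_free F' S -> conflict_free F S.
Proof.
move=> SF [_ cf']; split=> // a b aS bS.
by rewrite -attacksb_expansion_args ?cf' ?(subsetP SF).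
Qed.

Lemma admissible_expansion (S : {set U}) :
  S \subset args F -> admissible F' S -> admissible F S.
Proof.
move=> SF [cf' acc']; split; first exact: conflict_free_expansion.
move=> a aS b ba; have /andP[bF _] := attacksb_args ba.
have [c cS cb] := acc' a aS b (attacksb_expansion ba).
by exists c; rewrite // -attacksb_expansion_args // (subsetP SF).
Qed.

End NormalExpansion.

Theorem proposition57 (U : finType) (sigma : semantics U) :
  ext_maximal_admissible sigma ->
  forall F F' : AF U, normal_expansion F F' ->
  (forall E, sigma F E -> exists2 E', sigma F' E' & E \subset E') ->
  forall E, sigma F E ->
    exists2 E', sigma F' E' & (~~ (E' \subset args F) \/ E' = E).
Proof.
move=> sigma_max F F' FF' sigma_ext E sE.
have [E' sE' EE'] := sigma_ext E sE.
exists E' => //; have [E'F | _] := boolP (E' \subset args F); last by left.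
right; have [_ maxE] := sigma_max _ _ sE.
have [admE' _] := sigma_max _ _ sE'.
exact: maxE (admissible_expansion FF' E'F admE') EE'.
Qed.
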